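(* Let $\alpha,\beta>0$, $\mu>0$, $\lambda_1,\lambda_2\ge 0$ with $\lambda_1>\lambda_2$, and fix a real $\omega>0$. Let $$\Delta(s,\omega)=\det(Q+sR-\omega I)=(\lambda_1-\mu)(\lambda_2-\mu)s^2-\big[(\lambda_1-\mu)(\omega+\beta)+(\lambda_2-\mu)(\omega+\alpha)\big]s+\omega(\omega+\alpha+\beta),$$ and, when $(\lambda_1-\mu)(\lambda_2-\mu)\neq 0$, let $$s_{1,2}(\omega)=\frac{b\pm\sqrt{b^2-4\omega(\omega+\alpha+\beta)(\lambda_1-\mu)(\lambda_2-\mu)}}{2(\lambda_1-\mu)(\lambda_2-\mu)},\qquad b=(\lambda_1-\mu)(\omega+\beta)+(\lambda_2-\mu)(\omega+\alpha),$$ with $+$ for $s_1$ and $-$ for $s_2$. Then: 1. If $\lambda_2>\mu$ (hence $\lambda_1>\mu$), no starvation occurs (for every initial buffer level $x>0$, $X(t)>0$ for all $t\ge 0$). 2. If $\lambda_2<\mu<\lambda_1$, then $\mathrm{Re}(s_2(\omega))>0$ and $\mathrm{Re}(s_1(\omega))<0$. 3. If $\lambda_2<\mu$ and $\lambda_1<\mu$, then $\mathrm{Re}(s_1(\omega))<0$ and $\mathrm{Re}(s_2(\omega))<0$. 4. If $\lambda_2=\mu$ (hence $\lambda_1>\mu$), no starvation occurs. 5. If $\lambda_1=\mu$ (hence $\lambda_2<\mu$), then $\Delta(\cdot,\omega)$ has the single root $s(\omega)=\dfrac{\omega(\omega+\alpha+\beta)}{(\lambda_2-\mu)(\omega+\alpha)}$,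 and $\mathrm{Re}(s(\omega))<0$.
   Context: Two-state Markov modulated fluid model of a playout buffer: $\{I(t),t\ge0\}$ is a continuous-time Markov chain on $\{1,2\}$ with generator $Q=\begin{pmatrix}-\beta&\beta\\ \alpha&-\alpha\end{pmatrix}$, and the rate matrix is $R=\mathrm{diag}(\lambda_2-\mu,\ \lambda_1-\mu)$, i.e. frames arrive at rate $\lambda_2$ in state 1 and $\lambda_1$ in state 2 and are played at constant rate $\mu$. The buffer content $X(t)\ge 0$ evolves as $\frac{d}{dt}X(t)=R_{I(t)I(t)}$, starting from $X(0)=x>0$. Starvation means that the buffer empties, i.e. $\tau=\inf\{t>0:X(t)=0\}<\infty$. The variable $\omega$ is the Laplace transform variable for the starvation time $\tau$; $I$ denotes the $2\times 2$ identity matrix. *)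

From HB Require Import structures.
From mathcomp Require Import all_boot all_algebra.
From mathcomp Require Import all_classical all_reals all_analysis.
From mathcomp Require Export complex.

Set Implicit Arguments.
Unset Strict Implicit.
Unset Printing Implicit Defensive.

Import GRing.Theory Num.Theory.
Local Open Scope ring_scope.
Local Open Scope complex_scope.

Section Fluid.
Variable R : realType.
Variables (alpha beta mu lambda1 lambda2 : R).

(* States are indexed by 'I_2: index 0 is state 1, index 1 is state 2. *)

Definition genQ : 'M[R]_2 :=
  \matrix_(i < 2, j < 2)
     if (i : nat) == 0%N then (if (j : nat) == 0%N then - beta else beta)
     else (if (j : nat) == 0%N then alpha else - alpha).

Definition rate (i : 'I_2) : R :=
  if (i : nat) == 0%N then lambda2 - mu else lambda1 - mu.

Definition rateM : 'M[R]_2 := \matrix_(i < 2, j < 2) if i == j then rate i else 0.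

Definition Delta (omega : R) (s : R[i]) : R[i] :=
  \det (map_mx (fun x => x%:C) genQ + s *: map_mx (fun x => x%:C) rateM
        - (omega%:C)%:M).

Definition bcoef (omega : R) : R :=
  (lambda1 - mu) * (omega + beta) + (lambda2 - mu) * (omega + alpha).

Definition pcoef : R := (lambda1 - mu) * (lambda2 - mu).

Definition discr (omega : R) : R :=
  bcoef omega ^+ 2 - 4 * omega * (omega + alpha + beta) * pcoef.

Definition s1 (omega : R) : R[i] :=
  ((bcoef omega)%:C + sqrtc ((discr omega)%:C)) / ((2 * pcoef)%:C).
Definition s2 (omega : R) : R[i] :=
  ((bcoef omega)%:C - sqrtc ((discr omega)%:C)) / ((2 * pcoef)%:C).

(* Buffer content along a sample path I of the environment, started at x,
   up to the starvation time: X(t) = x + int_0^t R_{I(u)I(u)} du. *)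
Definition buffer (I : R -> 'I_2) (x t : R) : \bar R :=
  (x%:E + \int[@lebesgue_measure R]_(u in `[0%R, t]%classic) (rate (I u))%:E)%E.

Definition sample_path (I : R -> 'I_2) : Prop :=
  forall i : 'I_2, measurable (I @^-1` [set i]).

Definition no_starvation : Prop :=
  forall (I : R -> 'I_2) (x : R), sample_path I -> 0 < x ->
    forall t : R, 0 <= t -> (0 < buffer I x t)%E.

End Fluid.

From HB Require Import structures.
From mathcomp Require Import all_boot all_algebra.
From mathcomp Require Import all_classical all_reals all_analysis.
From mathcomp Require Import complex.
From mathcomp Require Import ring lra.
Import GRing.Theory Num.Theory order.Order.TTheory.
Local Open Scope ring_scope.

(* Expanding the determinant gives Delta(s) = p s^2 - b s + K with
   p = (lambda1 - mu)(lambda2 - mu) and K = omega (omega + alpha + beta) > 0.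
   The real parts of s1, s2 are (b +- sqrt d) / 2p with d = b^2 - 4 K p
   (the square root vanishing when d < 0).  If p < 0 then d > b^2, so sqrt d
   exceeds |b| and the two roots have opposite signs; if p > 0 (both rates
   negative) then b < 0 and sqrt d < |b|, so both are negative.  When
   lambda1 = mu the quadratic term disappears and the only root is K / b.
   When lambda2 >= mu both rates are nonnegative, so the buffer never
   decreases. *)

Lemma det_mx2 (F : comNzRingType) (A : 'M[F]_2) :
  \det A = A 0 0 * A 1 1 - A 0 1 * A 1 0.
Proof.
rewrite (expand_det_row _ ord0) !big_ord_recl big_ord0 /cofactor.
rewrite !det_mx11 !mxE /= expr0 expr1 addr0 mul1r mulN1r mulrN.
by congr (_ * A _ _ - A _ _ * A _ _); apply/val_inj.
Qed.

Lemma Re_sqrtc_real (R : rcfType) (x : R) : complex.Re (sqrtc x%:C)%C = Num.sqrt x.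
Proof.
rewrite /sqrtc /= expr0n addr0 sqrtr_sqr.
have [x_ge0 | x_lt0] := leP 0 x.
  by rewrite ger0_norm // mulrDl -splitr.
by rewrite ltr0_norm // addNr mul0r sqrtr0 ltr0_sqrtr.
Qed.

Lemma Re_divr_real (R : rcfType) (z : R[i]) (r : R) :
  complex.Re (z / r%:C)%C = complex.Re z / r.
Proof. by case: z => a c; rewrite -fmorphV /=; ring. Qed.

Lemma subr_mulr_eq0 (F : fieldType) (a c s : F) :
  c != 0 -> a - c * s = 0 <-> s = a / c.
Proof.
move=> c_neq0; split=> [/eqP | ->]; last by rewrite mulrC divfK // subrr.
by rewrite subr_eq0 => /eqP ->; rewrite [c * s]mulrC mulfK.
Qed.

Lemma no_starvation_of_rate_ge0 (R : realType) (mu lambda1 lambda2 : R) :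
  (forall i, 0 <= rate mu lambda1 lambda2 i) -> no_starvation mu lambda1 lambda2.
Proof.
move=> rate_ge0 I x _ x_gt0 t _; rewrite /buffer.
apply: (lt_le_trans _ (leeDl _ _)); first by rewrite lte_fin.
by apply: integral_ge0 => u _; rewrite lee_fin.
Qed.

Lemma rate_ge0 (R : realType) (mu lambda1 lambda2 : R) :
  mu <= lambda2 -> lambda2 <= lambda1 -> forall i, 0 <= rate mu lambda1 lambda2 i.
Proof. by move=> ? ? i; rewrite /rate; case: ifP => _; lra. Qed.

Section Roots.
Variable R : realType.
Variables alpha beta mu lambda1 lambda2 omega : R.
Hypotheses (alpha_gt0 : 0 < alpha) (beta_gt0 : 0 < beta) (omega_gt0 : 0 < omega).

Local Notation bw := (bcoef alpha beta mu lambda1 lambda2 omega).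
Local Notation pw := (pcoef mu lambda1 lambda2).
Local Notation dw := (discr alpha beta mu lambda1 lambda2 omega).
Local Notation Kw := (omega * (omega + alpha + beta)).

Lemma K_gt0 : 0 < Kw.
Proof. by rewrite mulr_gt0 ?addr_gt0. Qed.

Lemma discr_sub_sqr : dw - bw ^+ 2 = - 4 * Kw * pw.
Proof. by rewrite /discr; ring. Qed.

Lemma Re_s1 : complex.Re (s1 alpha beta mu lambda1 lambda2 omega)
  = (bw + Num.sqrt dw) / (2 * pw).
Proof. by rewrite /s1 Re_divr_real -Re_sqrtc_real; case: (sqrtc _). Qed.

Lemma Re_s2 : complex.Re (s2 alpha beta mu lambda1 lambda2 omega)
  = (bw - Num.sqrt dw) / (2 * pw).
Proof. by rewrite /s2 Re_divr_real -Re_sqrtc_real; case: (sqrtc _). Qed.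

Lemma Delta_quadratic (s : R[i]) :
  Delta alpha beta mu lambda1 lambda2 omega s = (pw%:C * s ^+ 2 - bw%:C * s + Kw%:C)%C.
Proof.
rewrite /Delta det_mx2 !mxE /= /rate /= /pcoef /bcoef.
by rewrite !(rmorphM, rmorphD, rmorphB, rmorphN, rmorph0); ring.
Qed.

Lemma Re_s_opposite_signs : lambda2 < mu < lambda1 ->
  0 < complex.Re (s2 alpha beta mu lambda1 lambda2 omega) /\
  complex.Re (s1 alpha beta mu lambda1 lambda2 omega) < 0.
Proof.
case/andP=> lt_l2_mu lt_mu_l1.
have p_lt0 : pw < 0 by rewrite /pcoef; nra.
have lt_b2_d : bw ^+ 2 < dw by have := discr_sub_sqr; have := K_gt0; nra.
have : `|bw| < Num.sqrt dw.
  by rewrite -sqrtr_sqr ltr_sqrt //; exact: le_lt_trans (sqr_ge0 bw) lt_b2_d.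
rewrite ltr_norml Re_s1 Re_s2 => /andP [? ?].
have : (2 * pw)^-1 < 0 by rewrite invr_lt0; lra.
split; nra.
Qed.

Lemma Re_s_neg : lambda2 < mu -> lambda1 < mu ->
  complex.Re (s1 alpha beta mu lambda1 lambda2 omega) < 0 /\
  complex.Re (s2 alpha beta mu lambda1 lambda2 omega) < 0.
Proof.
move=> lt_l2_mu lt_l1_mu.
have p_gt0 : 0 < pw by rewrite /pcoef; nra.
have b_lt0 : bw < 0.
  have : 0 < (mu - lambda1) * (omega + beta) by apply: mulr_gt0; rewrite ?subr_gt0 ?addr_gt0.
  have : 0 < (mu - lambda2) * (omega + alpha) by apply: mulr_gt0; rewrite ?subr_gt0 ?addr_gt0.
  rewrite /bcoef; lra.
have lt_d_b2 : dw < bw ^+ 2 by have := discr_sub_sqr; have := K_gt0; nra.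
have : Num.sqrt dw < - bw.
  by rewrite -(ltr0_norm b_lt0) -sqrtr_sqr ltr_sqrt // exprn_even_gt0 // lt_eqF.
have := sqrtr_ge0 dw; rewrite Re_s1 Re_s2 => ? ?.
have : 0 < (2 * pw)^-1 by rewrite invr_gt0; lra.
split; nra.
Qed.

Lemma Delta_root_lambda1_mu (s : R[i]) : lambda1 = mu -> lambda2 < mu ->
  Delta alpha beta mu lambda1 lambda2 omega s = 0 <->
  s = ((Kw / ((lambda2 - mu) * (omega + alpha)))%:C)%C.
Proof.
move=> l1_mu lt_l2_mu; have b_eq : bw = (lambda2 - mu) * (omega + alpha).
  by rewrite /bcoef l1_mu; ring.
have p_eq0 : pw = 0 by rewrite /pcoef l1_mu subrr mul0r.
rewrite Delta_quadratic p_eq0 mul0r sub0r addrC b_eq [X in s = X]rmorphM fmorphV.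
apply: subr_mulr_eq0; rewrite fmorph_eq0 mulf_neq0 //.
  by rewrite ltr0_neq0 ?subr_lt0.
by rewrite lt0r_neq0 ?addr_gt0.
Qed.

End Roots.

Theorem proposition1 (R : realType) (alpha beta mu lambda1 lambda2 omega : R) :
  0 < alpha -> 0 < beta -> 0 < mu -> 0 <= lambda1 -> 0 <= lambda2 ->
  lambda2 < lambda1 -> 0 < omega ->
  [/\ (mu < lambda2 -> no_starvation mu lambda1 lambda2),
      (lambda2 < mu < lambda1 ->
         0 < complex.Re (s2 alpha beta mu lambda1 lambda2 omega) /\
         complex.Re (s1 alpha beta mu lambda1 lambda2 omega) < 0),
      (lambda2 < mu -> lambda1 < mu ->
         complex.Re (s1 alpha beta mu lambda1 lambda2 omega) < 0 /\
         complex.Re (s2 alpha beta mu lambda1 lambda2 omega) < 0),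
      (lambda2 = mu -> no_starvation mu lambda1 lambda2)
    & (lambda1 = mu ->
         let s0 := omega * (omega + alpha + beta) / ((lambda2 - mu) * (omega + alpha)) in
         (forall s : R[i], Delta alpha beta mu lambda1 lambda2 omega s = 0 <-> s = (s0%:C)%C)
         /\ complex.Re ((s0%:C)%C) < 0)].
Proof.
move=> alpha_gt0 beta_gt0 _ _ _ lt_l2_l1 omega_gt0; split.
- by move=> ?; apply/no_starvation_of_rate_ge0/rate_ge0; lra.
- exact: Re_s_opposite_signs.
- exact: Re_s_neg.
- by move=> ?; apply/no_starvation_of_rate_ge0/rate_ge0; lra.
- move=> l1_mu s0; have lt_l2_mu : lambda2 < mu by lra.
  split=> [s|]; first exact: Delta_root_lambda1_mu.
  rewrite /= /s0 pmulr_rlt0 ?K_gt0 // invr_lt0 pmulr_llt0; lra.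
Qed.
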